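(* Let $f$ be a ternary cubic form with $f_{333}\neq0$, and set $g=\Delta_{333}f-f_{333}\Delta$. (1) $f$ is completely reducible (a product of three linear forms) if and only if $g_{113}=g_{123}=g_{223}=g_{133}=g_{233}=0$. (2) If moreover $4f_{113}f_{223}-f_{123}^2\neq0$, then $f$ is completely reducible if and only if $g_{113}=g_{123}=g_{223}=0$.
   Context: A ternary cubic form is written $f=\sum_{1\le i\le j\le k\le3}f_{ijk}x_ix_jx_k$ with complex coefficients, so $f_{ijk}$ is the coefficient of $x_ix_jx_k$; the same convention applies to $g_{ijk}$ and $\Delta_{ijk}$. $\Delta$ is the Hessian of $f$ normalized as $\Delta=\tfrac12\det(\partial^2f/\partial x_i\partial x_j)$; equivalently $\Delta=\tfrac1{12}J^2[f,f,f]$, where $J^2$ is the second transvectant. *)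

From HB Require Import structures.
From mathcomp Require Import all_boot all_order all_algebra.
From mathcomp Require Import complex.
From mathcomp Require reals.
Import reals.Real.Exports.
From mathcomp Require Import mpoly.
Set Implicit Arguments. Unset Strict Implicit. Unset Printing Implicit Defensive.
Import Order.TTheory GRing.Theory Num.Theory.
Local Open Scope ring_scope.

(* Ternary forms over a commutative ring K: elements of {mpoly K[3]};
   variables x_1, x_2, x_3 are 'X_0, 'X_1, 'X_2. *)

(* f_{ijk} : coefficient of x_i x_j x_k (indices i <= j <= k given as
   ordinals 0,1,2 standing for 1,2,3). *)
Definition cf3 {K : comRingType} (f : {mpoly K[3]}) (i j k : 'I_3) : K :=
  f@_(U_(i) + U_(j) + U_(k))%MM.

Definition hessmx {K : comRingType} (f : {mpoly K[3]}) : 'M[{mpoly K[3]}]_3 :=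
  \matrix_(i < 3, j < 3) mderiv i (mderiv j f).

Definition hessian {K : fieldType} (f : {mpoly K[3]}) : {mpoly K[3]} :=
  (2%:R^-1 : K) *: \det (hessmx f).

Definition completely_reducible {K : comRingType} (f : {mpoly K[3]}) : Prop :=
  exists l1 l2 l3 : {mpoly K[3]},
    [/\ l1 \is 1.-homog, l2 \is 1.-homog, l3 \is 1.-homog & f = l1 * l2 * l3].

Definition e1 : 'I_3 := @Ordinal 3 0 isT.
Definition e2 : 'I_3 := @Ordinal 3 1 isT.
Definition e3 : 'I_3 := @Ordinal 3 2 isT.

From HB Require Import structures.
From mathcomp Require Import all_boot all_order all_algebra.
From mathcomp Require Import complex.
From mathcomp Require reals.
Import reals.Real.Exports.
From mathcomp Require Import mpoly ring.
Import GRing.Theory Num.Theory.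
Set Implicit Arguments. Unset Strict Implicit. Unset Printing Implicit Defensive.
Local Open Scope ring_scope.

(* Since f_333 <> 0, f = a ((z + l)^3 + q (z + l) + k) with l, q, k binary forms in x, y
   of degrees 1, 2, 3, and f is a product of linear forms iff the depressed cubic
   Z^3 + q Z + k factors as (Z + l1) (Z + l2) (Z + l3) with l1 + l2 + l3 = 0.  This happens
   iff two SL_2-covariants of (q, k) vanish: a linear one and 4 disc(q) q - 12 Hess(k).
   Both are checked on the normal forms 0, x^2, x y of q, to which covariance reduces the
   general case.  A direct computation shows that g_133, g_233 are -12 a^4 times the
   linear covariant and g_113, g_123, g_223 are a^4 times the quadratic one corrected by
   -24 l times the linear one; this gives (1).  For (2), 4 f_113 f_223 - f_123^2 is
   a^2 disc(q + 3 l^2), and when it is nonzero the vanishing of the corrected quadratic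
   covariant forces that of the linear one (again checked on the normal forms). *)

(** * Binary forms and their covariants *)

Record blin (R : Type) := BLin { lx : R; ly : R }.
Record bquad (R : Type) := BQuad { qxx : R; qxy : R; qyy : R }.
Record bcubic (R : Type) := BCubic { kxxx : R; kxxy : R; kxyy : R; kyyy : R }.
Record mx2 (R : Type) := Mx2 { m11 : R; m12 : R; m21 : R; m22 : R }.

Section BinaryForms.
Variable R : comNzRingType.
Implicit Types (l : blin R) (q : bquad R) (k : bcubic R) (M : mx2 R).

Definition lin_scale (a : R) l := BLin (a * lx l) (a * ly l).
Definition quad_scale (a : R) q := BQuad (a * qxx q) (a * qxy q) (a * qyy q).
Definition lin_mul l l' : bquad R :=
  BQuad (lx l * lx l') (lx l * ly l' + ly l * lx l') (ly l * ly l').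

Definition mx2_det M := m11 M * m22 M - m12 M * m21 M.

(* [p M] is the form [v |-> p (M v)], i.e. x := m11 x + m12 y, y := m21 x + m22 y. *)
Definition lin_act l M :=
  BLin (lx l * m11 M + ly l * m21 M) (lx l * m12 M + ly l * m22 M).
Definition quad_act q M :=
  let: BQuad a b c := q in let: Mx2 s t u v := M in
  BQuad (a * s ^+ 2 + b * s * u + c * u ^+ 2)
        (2 * a * s * t + b * (s * v + t * u) + 2 * c * u * v)
        (a * t ^+ 2 + b * t * v + c * v ^+ 2).
Definition cubic_act k M :=
  let: BCubic a b c d := k in let: Mx2 s t u v := M in
  BCubic (a * s ^+ 3 + b * s ^+ 2 * u + c * s * u ^+ 2 + d * u ^+ 3)
    (3 * a * s ^+ 2 * t + b * (2 * s * u * t + s ^+ 2 * v)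
     + c * (2 * s * u * v + u ^+ 2 * t) + 3 * d * u ^+ 2 * v)
    (3 * a * s * t ^+ 2 + b * (2 * s * t * v + u * t ^+ 2)
     + c * (s * v ^+ 2 + 2 * u * t * v) + 3 * d * u * v ^+ 2)
    (a * t ^+ 3 + b * t ^+ 2 * v + c * t * v ^+ 2 + d * v ^+ 3).

Definition disc q := 4 * qxx q * qyy q - qxy q ^+ 2.

(* A quarter of the Hessian [k_xx k_yy - k_xy^2] of [k]. *)
Definition bhess k :=
  let: BCubic a b c d := k in
  BQuad (3 * a * c - b ^+ 2) (9 * a * d - b * c) (3 * b * d - c ^+ 2).

(* A quarter of the second transvectant [(q, k)_2]. *)
Definition lin_cov q k :=
  let: BQuad a b c := q in let: BCubic k0 k1 k2 k3 := k in
  BLin (3 * c * k0 - b * k1 + a * k2) (c * k1 - b * k2 + 3 * a * k3).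

Definition quad_cov q k :=
  BQuad (4 * disc q * qxx q - 12 * qxx (bhess k))
        (4 * disc q * qxy q - 12 * qxy (bhess k))
        (4 * disc q * qyy q - 12 * qyy (bhess k)).

Definition cov_vanish q k := lin_cov q k = BLin 0 0 /\ quad_cov q k = BQuad 0 0 0.

(* [Z^3 + q Z + k = (Z + l1) (Z + l2) (Z + l3)] with [l_i = u_i x + v_i y]. *)
Definition splits q k := exists u1 v1 u2 v2 u3 v3 : R,
  [/\ u1 + u2 + u3 = 0, v1 + v2 + v3 = 0,
      q = BQuad (u1 * u2 + u1 * u3 + u2 * u3)
                (u1 * v2 + v1 * u2 + u1 * v3 + v1 * u3 + u2 * v3 + v2 * u3)
                (v1 * v2 + v1 * v3 + v2 * v3)
    & k = BCubic (u1 * u2 * u3) (u1 * u2 * v3 + u1 * v2 * u3 + v1 * u2 * u3)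
                 (u1 * v2 * v3 + v1 * u2 * v3 + v1 * v2 * u3) (v1 * v2 * v3)].

(* For the depressed ternary cubic [a ((z + l)^3 + q (z + l) + k)] the
   coefficient of [z] is [a (q + 3 l^2)]. *)
Definition quad_shift l q :=
  BQuad (qxx q + 3 * lx l ^+ 2) (qxy q + 6 * lx l * ly l) (qyy q + 3 * ly l ^+ 2).

Definition quad_cov_shift l q k :=
  let P := lin_mul l (lin_cov q k) in
  BQuad (qxx (quad_cov q k) - 24 * qxx P) (qxy (quad_cov q k) - 24 * qxy P)
        (qyy (quad_cov q k) - 24 * qyy P).

End BinaryForms.

Ltac unfold_forms := unfold quad_cov_shift, quad_shift, quad_cov, lin_cov, bhess,
  disc, lin_scale, quad_scale, lin_mul, mx2_det, lin_act, quad_act, cubic_act; simpl.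

Section Covariants.
Variable R : comNzRingType.
Implicit Types (l : blin R) (q : bquad R) (k : bcubic R) (M : mx2 R).

Lemma addr3_eq0 (a b c : R) : a + b + c = 0 -> c = - a - b.
Proof. by move/eqP; rewrite addrC addr_eq0 opprD => /eqP. Qed.

Lemma splits_cov_vanish q k : splits q k -> cov_vanish q k.
Proof.
move=> [u1 [v1 [u2 [v2 [u3 [v3 [Su Sv -> ->]]]]]]].
rewrite (addr3_eq0 Su) (addr3_eq0 Sv).
by split; unfold_forms; [congr BLin | congr BQuad]; ring.
Qed.

Lemma splits_act q k M : splits q k -> splits (quad_act q M) (cubic_act k M).
Proof.
move=> [u1 [v1 [u2 [v2 [u3 [v3 [Su Sv -> ->]]]]]]].
rewrite (addr3_eq0 Su) (addr3_eq0 Sv); case: M => s t u v.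
pose l1 := lin_act (BLin u1 v1) (Mx2 s t u v).
pose l2 := lin_act (BLin u2 v2) (Mx2 s t u v).
exists (lx l1), (ly l1), (lx l2), (ly l2), (- lx l1 - lx l2), (- ly l1 - ly l2).
by split; rewrite /l1 /l2; unfold_forms; try congr BQuad; try congr BCubic; ring.
Qed.

Lemma disc_act q M : disc (quad_act q M) = mx2_det M ^+ 2 * disc q.
Proof. by case: q M => [a b c] [s t u v]; unfold_forms; ring. Qed.

Lemma quad_shift_act l q M :
  quad_shift (lin_act l M) (quad_act q M) = quad_act (quad_shift l q) M.
Proof. by case: l q M => [a b] [c d e] [s t u v]; unfold_forms; congr BQuad; ring. Qed.

Lemma lin_cov_act q k M : lin_cov (quad_act q M) (cubic_act k M) =
  lin_scale (mx2_det M ^+ 2) (lin_act (lin_cov q k) M).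
Proof.
by case: q k M => [a b c] [k0 k1 k2 k3] [s t u v]; unfold_forms; congr BLin; ring.
Qed.

Lemma quad_cov_act q k M : quad_cov (quad_act q M) (cubic_act k M) =
  quad_scale (mx2_det M ^+ 2) (quad_act (quad_cov q k) M).
Proof.
by case: q k M => [a b c] [k0 k1 k2 k3] [s t u v]; unfold_forms; congr BQuad; ring.
Qed.

Lemma quad_cov_shift_act l q k M :
  quad_cov_shift (lin_act l M) (quad_act q M) (cubic_act k M) =
  quad_scale (mx2_det M ^+ 2) (quad_act (quad_cov_shift l q k) M).
Proof.
case: l q k M => [al be] [a b c] [k0 k1 k2 k3] [s t u v].
by unfold_forms; congr BQuad; ring.
Qed.

Lemma quad_cov_shift_lin_cov0 l q k :
  lin_cov q k = BLin 0 0 -> quad_cov_shift l q k = quad_cov q k.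
Proof. by rewrite /quad_cov_shift => ->; rewrite /lin_mul /quad_cov /=; congr BQuad; ring. Qed.

Lemma quad_cov0 k : quad_cov (BQuad 0 0 0) k = quad_scale (- 12) (bhess k).
Proof. by case: k => a b c d; unfold_forms; congr BQuad; ring. Qed.

Lemma lin_cov_act0 q k M :
  lin_cov q k = BLin 0 0 -> lin_cov (quad_act q M) (cubic_act k M) = BLin 0 0.
Proof. by rewrite lin_cov_act => ->; case: M => s t u v; unfold_forms; congr BLin; ring. Qed.

Lemma cov_vanish_act q k M :
  cov_vanish q k -> cov_vanish (quad_act q M) (cubic_act k M).
Proof.
case=> /(lin_cov_act0 M) T E; split=> //; rewrite quad_cov_act E {T}.
by case: M => s t u v; unfold_forms; congr BQuad; ring.
Qed.

Lemma quad_cov_shift_act0 l q k M : quad_cov_shift l q k = BQuad 0 0 0 ->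
  quad_cov_shift (lin_act l M) (quad_act q M) (cubic_act k M) = BQuad 0 0 0.
Proof.
by rewrite quad_cov_shift_act => ->; case: M => s t u v; unfold_forms; congr BQuad; ring.
Qed.

End Covariants.

Section Scaling.
Variables (D : idomainType) (a : D).
Hypothesis a0 : a != 0.

Let mul_eq0 x : a * x = 0 -> x = 0.
Proof. by move/eqP; rewrite mulf_eq0 (negbTE a0) => /eqP. Qed.

Lemma lin_scale_eq0 (l : blin D) : lin_scale a l = BLin 0 0 <-> l = BLin 0 0.
Proof.
case: l => x y; split=> [[/mul_eq0 -> /mul_eq0 ->] // | [-> ->]].
by rewrite /lin_scale /= mulr0.
Qed.

Lemma quad_scale_eq0 (q : bquad D) : quad_scale a q = BQuad 0 0 0 <-> q = BQuad 0 0 0.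
Proof.
case: q => x y z; split=> [[/mul_eq0 -> /mul_eq0 -> /mul_eq0 ->] // | [-> -> ->]].
by rewrite /quad_scale /= mulr0.
Qed.

End Scaling.

Section BinaryFormsField.
Variable F : fieldType.
Implicit Types (q : bquad F) (k : bcubic F) (M : mx2 F).

Definition mx2_inv M :=
  let d := mx2_det M in Mx2 (m22 M / d) (- m12 M / d) (- m21 M / d) (m11 M / d).

Lemma mx2_det_inv M : mx2_det M != 0 -> mx2_det (mx2_inv M) = (mx2_det M)^-1.
Proof. by case: M => s t u v; rewrite /mx2_inv /mx2_det /= => d0; field. Qed.

Lemma quad_act_invK q M : mx2_det M != 0 -> quad_act (quad_act q M) (mx2_inv M) = q.
Proof.
case: q M => [a b c] [s t u v]; rewrite /mx2_inv /mx2_det /= => d0.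
by congr BQuad; field.
Qed.

Lemma cubic_act_invK k M : mx2_det M != 0 -> cubic_act (cubic_act k (mx2_inv M)) M = k.
Proof.
case: k M => [k0 k1 k2 k3] [s t u v]; rewrite /mx2_inv /mx2_det /= => d0.
by congr BCubic; field.
Qed.

End BinaryFormsField.

(** * Splitting of depressed binary cubics *)

Section ClosedField.
Variable K : numClosedFieldType.
Implicit Types (l : blin K) (q : bquad K) (k : bcubic K) (M : mx2 K).

Lemma depressed_cubic_roots (p r : K) : exists r1 r2 r3 : K,
  [/\ r1 + r2 + r3 = 0, r1 * r2 + r1 * r3 + r2 * r3 = p & r1 * r2 * r3 = r].
Proof.
have [r1 Er1] := @solve_monicpoly K 3 (nth 0 [:: r; - p]) isT.
rewrite !big_ord_recl big_ord0 /bump /= in Er1.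
have Er : r = r1 ^+ 3 + p * r1 by rewrite Er1; ring.
(* the two other roots solve [Z^2 + r1 Z + (r1^2 + p)] *)
have [d Ed] : exists d, d ^+ 2 = - 3 * r1 ^+ 2 - 4 * p by eexists; apply: sqrtCK.
exists r1, ((- r1 + d) / 2), ((- r1 - d) / 2).
have Ep : p = (- 3 * r1 ^+ 2 - d ^+ 2) / 4 by rewrite Ed; field.
by rewrite Er Ep; split; field.
Qed.

Lemma exists_cube_root (a : K) : exists u, u ^+ 3 = a.
Proof. by exists (3.-root a); rewrite rootCK. Qed.

Lemma exists_cube_root_unity : exists w : K, w ^+ 2 + w + 1 = 0.
Proof.
have [s Es] : exists s : K, s ^+ 2 = - 3 by eexists; apply: sqrtCK.
by exists ((-1 + s) / 2); field: Es.
Qed.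

Definition lin_cube l :=
  BCubic (lx l ^+ 3) (3 * lx l ^+ 2 * ly l) (3 * lx l * ly l ^+ 2) (ly l ^+ 3).

Lemma splits_cube l : splits (BQuad 0 0 0) (lin_cube l).
Proof.
have [w Ew] := exists_cube_root_unity.
have {}Ew : w ^+ 2 = - w - 1 by rewrite -[LHS]subr0 -Ew; ring.
exists (lx l), (ly l), (w * lx l), (w * ly l), (w ^+ 2 * lx l), (w ^+ 2 * ly l).
by split; rewrite /lin_cube; try congr BQuad; try congr BCubic; ring: Ew.
Qed.

Lemma bhess_eq0_cube k : bhess k = BQuad 0 0 0 -> exists l, k = lin_cube l.
Proof.
case: k => k0 k1 k2 k3 [] /eqP; rewrite subr_eq0 => /eqP E02 /eqP.
rewrite subr_eq0 => /eqP E03 /eqP; rewrite subr_eq0 => /eqP E13.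
have [k00 | k0n] := eqVneq k0 0.
  have k10 : k1 = 0 by apply/eqP; rewrite -sqrf_eq0 -E02 k00 mulr0 mul0r.
  have k20 : k2 = 0 by apply/eqP; rewrite -sqrf_eq0 -E13 k10 mulr0 mul0r.
  have [b Eb] := exists_cube_root k3.
  by exists (BLin 0 b); rewrite /lin_cube /= k00 k10 k20 Eb; congr BCubic; ring.
have Ek2 : k2 = k1 ^+ 2 / (3 * k0) by rewrite -E02; field.
have Ek3 : k3 = k1 ^+ 3 / (27 * k0 ^+ 2).
  have -> : k3 = k1 * k2 / (9 * k0) by rewrite -E03; field.
  by rewrite Ek2; field.
have [a Ea] := exists_cube_root k0.
have a0 : a != 0 by apply: contraNneq k0n => a0; rewrite -Ea a0 exprS mul0r.
exists (BLin a (a * k1 / (3 * k0))); rewrite /lin_cube /=; congr BCubic.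
- by rewrite Ea.
- by rewrite -Ea; field.
- by rewrite Ek2 -Ea; field.
- by rewrite Ek3 -Ea; field.
Qed.

Lemma splits_of_bhess0 k : bhess k = BQuad 0 0 0 -> splits (BQuad 0 0 0) k.
Proof. by move/bhess_eq0_cube=> [l ->]; apply: splits_cube. Qed.

Lemma splits_xx (a : K) : splits (BQuad 1 0 0) (BCubic a 0 0 0).
Proof.
have [r1 [r2 [r3 [E1 E2 E3]]]] := depressed_cubic_roots 1 a.
exists r1, 0, r2, 0, r3, 0.
by split; rewrite ?E1 -?E2 -?E3; try congr BQuad; try congr BCubic; ring.
Qed.

(* [Z^3 + x y Z + a x^3 + b y^3] is a twisted form of [X^3 + Y^3 + Z^3 - 3 X Y Z]. *)
Lemma splits_xy (a b : K) : 27 * a * b = -1 -> splits (BQuad 0 1 0) (BCubic a 0 0 b).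
Proof.
move=> Eab; have [u Eu] := exists_cube_root a.
have u0 : u != 0.
  apply/eqP=> u0; move: Eab; rewrite -Eu u0 exprS !(mul0r, mulr0) => /eqP.
  by rewrite eq_sym oppr_eq0 oner_eq0.
have a0 : a != 0 by rewrite -Eu expf_neq0.
have [w Ew] := exists_cube_root_unity.
have {}Ew : w ^+ 2 = - w - 1 by rewrite -[LHS]subr0 -Ew; ring.
pose v := - (3 * u)^-1.
have Eb : b = v ^+ 3.
  have -> : b = - 1 / (27 * a) by rewrite -Eab; field.
  by rewrite /v -Eu; field.
exists u, v, (w * u), (w ^+ 2 * v), (w ^+ 2 * u), (w * v).
by split; rewrite -?Eu ?Eb /v; try congr BQuad; try congr BCubic; field: Ew.
Qed.

Lemma quad_normal_nondeg q :
  disc q != 0 -> exists2 M, mx2_det M != 0 & q = quad_act (BQuad 0 1 0) M.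
Proof.
case: q => a b c; rewrite /disc /=.
have [-> D0 | a0 D0] := eqVneq a 0.
  have b0 : b != 0 by apply: contraNneq D0 => ->; rewrite mulr0 mul0r expr0n subrr.
  by exists (Mx2 0 1 b c); rewrite /mx2_det /=; [rewrite mul0r sub0r mul1r oppr_eq0 |
    congr BQuad; ring].
have [r Er] : exists r, r ^+ 2 = b ^+ 2 - 4 * a * c by eexists; apply: sqrtCK.
have r0 : r != 0 by apply: contraNneq D0 => r0; rewrite -oppr_eq0 opprB -Er r0 expr0n.
exists (Mx2 a ((b + r) / 2) 1 ((b - r) / (2 * a))); rewrite /mx2_det /=.
  by rewrite (_ : _ - _ = - r) ?oppr_eq0 //; field.
have Ec : c = (b ^+ 2 - r ^+ 2) / (4 * a) by rewrite Er; field.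
by rewrite Ec; congr BQuad; field.
Qed.

Lemma quad_normal_rank1 q : disc q = 0 -> q <> BQuad 0 0 0 ->
  exists2 M, mx2_det M != 0 & q = quad_act (BQuad 1 0 0) M.
Proof.
case: q => a b c; rewrite /disc /= => /eqP; rewrite subr_eq0 => /eqP D0 q0.
have [a0 | a0] := eqVneq a 0.
  have b0 : b = 0 by apply/eqP; rewrite -sqrf_eq0 -D0 a0 mulr0 mul0r.
  have [t Et] : exists t, t ^+ 2 = c by eexists; apply: sqrtCK.
  have t0 : t != 0 by apply/eqP => t0; apply: q0; rewrite a0 b0 -Et t0 expr0n.
  exists (Mx2 0 t 1 0); rewrite /mx2_det /=.
    by rewrite mul0r sub0r mulr1 oppr_eq0.
  by rewrite a0 b0 -Et; congr BQuad; ring.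
have [s Es] : exists s, s ^+ 2 = a by eexists; apply: sqrtCK.
have s0 : s != 0 by apply: contraNneq a0 => s0; rewrite -Es s0 expr0n.
exists (Mx2 s (b / (2 * s)) 0 1); rewrite /mx2_det /=.
  by rewrite mulr1 mulr0 subr0.
have Ec : c = b ^+ 2 / (4 * s ^+ 2) by rewrite -D0 -Es; field.
by rewrite Ec -Es; congr BQuad; field.
Qed.

Lemma pnatr_mul_eq0 (n : nat) (x : K) : (0 < n)%N -> n%:R * x = 0 -> x = 0.
Proof. by move=> n0 /eqP; rewrite mulf_eq0 pnatr_eq0 eqn0Ngt n0 => /eqP. Qed.

Lemma cov_vanish_zero k : cov_vanish (BQuad 0 0 0) k -> splits (BQuad 0 0 0) k.
Proof.
case=> _; rewrite quad_cov0 quad_scale_eq0 ?oppr_eq0 ?pnatr_eq0 //.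
exact: splits_of_bhess0.
Qed.

Lemma cov_vanish_xx k : cov_vanish (BQuad 1 0 0) k -> splits (BQuad 1 0 0) k.
Proof.
case: k => a b c d [[T1 T2] E]; move: E; unfold_forms => -[E _ _].
have c0 : c = 0 by rewrite -T1; ring.
have d0 : d = 0 by apply: (@pnatr_mul_eq0 3) => //; rewrite -T2; ring.
have b0 : b = 0.
  by apply/eqP; rewrite -sqrf_eq0; apply/eqP/(@pnatr_mul_eq0 12) => //; rewrite -E c0; ring.
by rewrite b0 c0 d0; apply: splits_xx.
Qed.

Lemma cov_vanish_xy k : cov_vanish (BQuad 0 1 0) k -> splits (BQuad 0 1 0) k.
Proof.
case: k => a b c d [[T1 T2] E]; move: E; unfold_forms => -[_ E _].
have b0 : b = 0 by apply/oppr_inj; rewrite oppr0 -T1; ring.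
have c0 : c = 0 by apply/oppr_inj; rewrite oppr0 -T2; ring.
rewrite b0 c0; apply: splits_xy.
have /(@pnatr_mul_eq0 4) : 4 * (27 * a * d + 1) = 0 by rewrite -[RHS]oppr0 -[in RHS]E b0 c0; ring.
by move=> /(_ isT) /eqP; rewrite addr_eq0 => /eqP.
Qed.

Lemma splits_transport q M k : mx2_det M != 0 ->
  (forall k', cov_vanish q k' -> splits q k') ->
  cov_vanish (quad_act q M) k -> splits (quad_act q M) k.
Proof.
move=> dM normal /(cov_vanish_act (mx2_inv M)); rewrite quad_act_invK // => /normal.
by move/(splits_act M); rewrite cubic_act_invK.
Qed.

Lemma quad_normal_form q : [\/ q = BQuad 0 0 0,
  exists2 M, mx2_det M != 0 & q = quad_act (BQuad 1 0 0) M |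
  exists2 M, mx2_det M != 0 & q = quad_act (BQuad 0 1 0) M].
Proof.
have [D0 | /quad_normal_nondeg nondeg] := eqVneq (disc q) 0; last by constructor 3.
case: q D0 => a b c D0.
have [/and3P [/eqP -> /eqP -> /eqP ->] | q0] := boolP [&& a == 0, b == 0 & c == 0].
  by constructor 1.
by constructor 2; apply: quad_normal_rank1 => // -[a0 b0 c0]; rewrite a0 b0 c0 !eqxx in q0.
Qed.

Lemma cov_vanish_splits q k : cov_vanish q k -> splits q k.
Proof.
case: (quad_normal_form q) => [-> | [M dM ->] | [M dM ->]].
- exact: cov_vanish_zero.
- exact/splits_transport/cov_vanish_xx.
- exact/splits_transport/cov_vanish_xy.
Qed.

Lemma splitsP q k : splits q k <-> cov_vanish q k.
Proof. by split; [apply: splits_cov_vanish | apply: cov_vanish_splits]. Qed.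

Lemma lin_cov_vanish_xy l k : quad_cov_shift l (BQuad 0 1 0) k = BQuad 0 0 0 ->
  disc (quad_shift l (BQuad 0 1 0)) != 0 -> lin_cov (BQuad 0 1 0) k = BLin 0 0.
Proof.
case: l k => al be [a b c d]; set F := quad_cov_shift _ _ _ => EF.
have [F11 F12 F22] : [/\ qxx F = 0, qxy F = 0 & qyy F = 0] by rewrite EF.
rewrite (_ : disc _ = - (1 + 12 * al * be)); last by unfold_forms; ring.
rewrite oppr_eq0 => D0.
(* [b c (1 + 12 al be)] lies in the ideal generated by the entries of [F]. *)
have E : 48 * (b * c * (1 + 12 * al * be)) = - 12 * b * c * qxy F + qxx F * qyy F
    + 36 * qxx F * b * d + 36 * qyy F * a * c by rewrite /F; unfold_forms; ring.
have /eqP : b * c * (1 + 12 * al * be) = 0.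
  by apply: (@pnatr_mul_eq0 48) => //; rewrite E F11 F12 F22; ring.
rewrite !mulf_eq0 (negbTE D0) orbF => /orP[] /eqP z.
  have E' : 4 * (c * (1 + 12 * al * be)) = 3 * d * qxx F + 2 * al * qyy F - c * qxy F.
    by rewrite /F; unfold_forms; rewrite z; ring.
  have /eqP : c * (1 + 12 * al * be) = 0.
    by apply: (@pnatr_mul_eq0 4) => //; rewrite E' F11 F12 F22; ring.
  rewrite mulf_eq0 (negbTE D0) orbF => /eqP z'.
  by rewrite z z'; unfold_forms; congr BLin; ring.
have E' : 4 * (b * (1 + 12 * al * be)) = 3 * a * qyy F + 2 * be * qxx F - b * qxy F.
  by rewrite /F; unfold_forms; rewrite z; ring.
have /eqP : b * (1 + 12 * al * be) = 0.
  by apply: (@pnatr_mul_eq0 4) => //; rewrite E' F11 F12 F22; ring.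
rewrite mulf_eq0 (negbTE D0) orbF => /eqP z'.
by rewrite z z'; unfold_forms; congr BLin; ring.
Qed.

Lemma lin_cov_vanish_xx l k : quad_cov_shift l (BQuad 1 0 0) k = BQuad 0 0 0 ->
  disc (quad_shift l (BQuad 1 0 0)) != 0 -> lin_cov (BQuad 1 0 0) k = BLin 0 0.
Proof.
case: l k => al be [a b c d]; set F := quad_cov_shift _ _ _ => EF.
have [F11 F12 F22] : [/\ qxx F = 0, qxy F = 0 & qyy F = 0] by rewrite EF.
rewrite (_ : disc _ = 12 * be ^+ 2); last by unfold_forms; ring.
rewrite mulf_eq0 pnatr_eq0 sqrf_eq0 /= => be0.
have E : 144 * (be ^+ 2 * d) = b * qyy F - 2 * be * qyy F - c * qxy F + 3 * d * qxx F.
  by rewrite /F; unfold_forms; ring.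
have /eqP : be ^+ 2 * d = 0.
  by apply: (@pnatr_mul_eq0 144) => //; rewrite E F11 F12 F22; ring.
rewrite mulf_eq0 sqrf_eq0 (negbTE be0) => /eqP d0.
have E' : 12 * c ^+ 2 = qyy F by rewrite /F; unfold_forms; rewrite d0; ring.
have /eqP : c ^+ 2 = 0 by apply: (@pnatr_mul_eq0 12) => //; rewrite E' F22.
rewrite sqrf_eq0 => /eqP c0.
by rewrite c0 d0; unfold_forms; congr BLin; ring.
Qed.

Lemma lin_cov_transport q M l k : mx2_det M != 0 ->
  (forall l' k', quad_cov_shift l' q k' = BQuad 0 0 0 ->
     disc (quad_shift l' q) != 0 -> lin_cov q k' = BLin 0 0) ->
  quad_cov_shift l (quad_act q M) k = BQuad 0 0 0 ->
  disc (quad_shift l (quad_act q M)) != 0 -> lin_cov (quad_act q M) k = BLin 0 0.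
Proof.
move=> dM normal /(quad_cov_shift_act0 (mx2_inv M)); rewrite quad_act_invK // => E D.
rewrite -(cubic_act_invK k dM); apply/lin_cov_act0/(normal _ _ E).
rewrite -(quad_act_invK q dM) quad_shift_act disc_act.
by rewrite mulf_neq0 // expf_neq0 // mx2_det_inv // invr_neq0.
Qed.

Lemma lin_cov_vanish_of_shift l q k : quad_cov_shift l q k = BQuad 0 0 0 ->
  disc (quad_shift l q) != 0 -> lin_cov q k = BLin 0 0.
Proof.
case: (quad_normal_form q) => [-> _ _ | [M dM ->] | [M dM ->]].
- by case: k => a b c d; unfold_forms; congr BLin; ring.
- exact/lin_cov_transport/lin_cov_vanish_xx.
- exact/lin_cov_transport/lin_cov_vanish_xy.
Qed.

End ClosedField.

(** * Ternary cubics *)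

Record tlin (R : Type) := TLin { la : R; lb : R; lc : R }.
(* Maximal implicits let the projections be passed to [gcoef] below. *)
Set Maximal Implicit Insertion.
Record tcubic (R : Type) := TCubic {
  c111 : R; c112 : R; c113 : R; c122 : R; c123 : R;
  c133 : R; c222 : R; c223 : R; c233 : R; c333 : R }.
Unset Maximal Implicit Insertion.

Section TernaryCubics.
Variable R : comNzRingType.
Implicit Types (c : tcubic R) (l : blin R) (q : bquad R) (k : bcubic R).

Definition tlin_prod (l1 l2 l3 : tlin R) :=
  let: TLin a1 b1 d1 := l1 in let: TLin a2 b2 d2 := l2 in let: TLin a3 b3 d3 := l3 in
  TCubic (a1 * a2 * a3) (a1 * a2 * b3 + a1 * a3 * b2 + a2 * a3 * b1)
    (a1 * a2 * d3 + a1 * a3 * d2 + a2 * a3 * d1) (a1 * b2 * b3 + a2 * b1 * b3 + a3 * b1 * b2)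
    (a1 * b2 * d3 + a1 * b3 * d2 + a2 * b1 * d3 + a2 * b3 * d1 + a3 * b1 * d2 + a3 * b2 * d1)
    (a1 * d2 * d3 + a2 * d1 * d3 + a3 * d1 * d2) (b1 * b2 * b3)
    (b1 * b2 * d3 + b1 * b3 * d2 + b2 * b3 * d1) (b1 * d2 * d3 + b2 * d1 * d3 + b3 * d1 * d2)
    (d1 * d2 * d3).

Definition tcubic_split c := exists l1 l2 l3 : tlin R, c = tlin_prod l1 l2 l3.

(* [a ((z + l)^3 + q (z + l) + k)] with [l], [q], [k] forms in [x], [y]. *)
Definition depressed (a : R) l q k :=
  let: BLin al be := l in let: BQuad q11 q12 q22 := q in
  let: BCubic k0 k1 k2 k3 := k in
  TCubic (a * (al ^+ 3 + al * q11 + k0)) (a * (3 * al ^+ 2 * be + al * q12 + be * q11 + k1))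
    (a * (3 * al ^+ 2 + q11)) (a * (3 * al * be ^+ 2 + al * q22 + be * q12 + k2))
    (a * (6 * al * be + q12)) (3 * a * al) (a * (be ^+ 3 + be * q22 + k3))
    (a * (3 * be ^+ 2 + q22)) (3 * a * be) a.

(* The coefficients of the Hessian [1/2 det (d^2 f / dx_i dx_j)]. *)
Definition tcubic_hess c :=
  let: TCubic f111 f112 f113 f122 f123 f133 f222 f223 f233 f333 := c in
  TCubic
    (12 * f111 * f122 * f133 - 3 * f111 * f123 ^+ 2 + 4 * f112 * f113 * f123
     - 4 * f112 ^+ 2 * f133 - 4 * f113 ^+ 2 * f122)
    (12 * f111 * f122 * f233 - 12 * f111 * f123 * f223 + 36 * f111 * f133 * f222
     + 8 * f112 * f113 * f223 - 4 * f112 * f122 * f133 + f112 * f123 ^+ 2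
     - 4 * f112 ^+ 2 * f233 - 12 * f113 ^+ 2 * f222)
    (36 * f111 * f122 * f333 - 12 * f111 * f123 * f233 + 12 * f111 * f133 * f223
     + 8 * f112 * f113 * f233 - 12 * f112 ^+ 2 * f333 - 4 * f113 * f122 * f133
     + f113 * f123 ^+ 2 - 4 * f113 ^+ 2 * f223)
    (36 * f111 * f222 * f233 - 12 * f111 * f223 ^+ 2 - 4 * f112 * f122 * f233
     + 12 * f112 * f133 * f222 + 8 * f113 * f122 * f223 - 12 * f113 * f123 * f222
     + f122 * f123 ^+ 2 - 4 * f122 ^+ 2 * f133)
    (108 * f111 * f222 * f333 - 12 * f111 * f223 * f233 - 12 * f112 * f122 * f333
     - 4 * f112 * f123 * f233 + 12 * f112 * f133 * f223 + 12 * f113 * f122 * f233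
     - 4 * f113 * f123 * f223 - 12 * f113 * f133 * f222 - 4 * f122 * f123 * f133
     + f123 ^+ 3)
    (36 * f111 * f223 * f333 - 12 * f111 * f233 ^+ 2 - 12 * f112 * f123 * f333
     + 8 * f112 * f133 * f233 + 12 * f113 * f122 * f333 - 4 * f113 * f133 * f223
     - 4 * f122 * f133 ^+ 2 + f123 ^+ 2 * f133)
    (12 * f112 * f222 * f233 - 4 * f112 * f223 ^+ 2 + 4 * f122 * f123 * f223
     - 4 * f122 ^+ 2 * f233 - 3 * f123 ^+ 2 * f222)
    (36 * f112 * f222 * f333 - 4 * f112 * f223 * f233 + 12 * f113 * f222 * f233
     - 4 * f113 * f223 ^+ 2 + 8 * f122 * f133 * f223 - 12 * f122 ^+ 2 * f333
     - 12 * f123 * f133 * f222 + f123 ^+ 2 * f223)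
    (12 * f112 * f223 * f333 - 4 * f112 * f233 ^+ 2 + 36 * f113 * f222 * f333
     - 4 * f113 * f223 * f233 - 12 * f122 * f123 * f333 + 8 * f122 * f133 * f233
     + f123 ^+ 2 * f233 - 12 * f133 ^+ 2 * f222)
    (12 * f113 * f223 * f333 - 4 * f113 * f233 ^+ 2 + 4 * f123 * f133 * f233
     - 3 * f123 ^+ 2 * f333 - 4 * f133 ^+ 2 * f223).

Definition gcoef c (p : tcubic R -> R) :=
  c333 (tcubic_hess c) * p c - c333 c * p (tcubic_hess c).

Lemma gcoef_depressed (a : R) l q k : let c := depressed a l q k in
  BQuad (gcoef c c113) (gcoef c c123) (gcoef c c223) = quad_scale (a ^+ 4) (quad_cov_shift l q k)
  /\ BLin (gcoef c c133) (gcoef c c233) = lin_scale (- 12 * a ^+ 4) (lin_cov q k).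
Proof.
case: l q k => al be [q11 q12 q22] [k0 k1 k2 k3].
by rewrite /gcoef /=; unfold_forms; split; [congr BQuad | congr BLin]; ring.
Qed.

Lemma disc_depressed (a : R) l q k : let c := depressed a l q k in
  disc (BQuad (c113 c) (c123 c) (c223 c)) = a ^+ 2 * disc (quad_shift l q).
Proof. by case: l q k => al be [q11 q12 q22] [k0 k1 k2 k3]; unfold_forms; ring. Qed.

Lemma tcubic_split_depressed (a : R) l q k : splits q k -> tcubic_split (depressed a l q k).
Proof.
case: l q k => al be [q11 q12 q22] [k0 k1 k2 k3].
move=> [u1 [v1 [u2 [v2 [u3 [v3 [Su Sv [-> -> ->] [-> -> -> ->]]]]]]]].
rewrite (addr3_eq0 Su) (addr3_eq0 Sv).
exists (TLin (a * (al + u1)) (a * (be + v1)) a), (TLin (al + u2) (be + v2) 1).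
by exists (TLin (al - u1 - u2) (be - v1 - v2) 1); rewrite /=; congr TCubic; ring.
Qed.

End TernaryCubics.

Section TernaryCubicsField.
Variable F : numFieldType.
Implicit Types (c : tcubic F) (l : blin F) (q : bquad F) (k : bcubic F).

Lemma depressed_form c : c333 c != 0 -> exists a l q k, a != 0 /\ c = depressed a l q k.
Proof.
case: c => f111 f112 f113 f122 f123 f133 f222 f223 f233 a /= a0.
pose al := f133 / (3 * a); pose be := f233 / (3 * a).
pose q11 := f113 / a - 3 * al ^+ 2; pose q12 := f123 / a - 6 * al * be.
pose q22 := f223 / a - 3 * be ^+ 2.
exists a, (BLin al be), (BQuad q11 q12 q22).
exists (BCubic (f111 / a - al ^+ 3 - al * q11) (f112 / a - 3 * al ^+ 2 * be - al * q12 - be * q11)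
  (f122 / a - 3 * al * be ^+ 2 - al * q22 - be * q12) (f222 / a - be ^+ 3 - be * q22)).
by split=> //=; rewrite /q11 /q12 /q22 /al /be; congr TCubic; field.
Qed.

Lemma splits_depressed (a : F) l q k : a != 0 ->
  tcubic_split (depressed a l q k) -> splits q k.
Proof.
case: l q k => al be [q11 q12 q22] [k0 k1 k2 k3] a0.
move=> [[a1 b1 d1] [[a2 b2 d2] [[a3 b3 d3] /=]]].
move=> [E111 E112 E113 E122 E123 E133 E222 E223 E233 E333]; subst a.
have /and3P[d1n d2n d3n] : [&& d1 != 0, d2 != 0 & d3 != 0].
  by move: a0; rewrite !mulf_eq0 !negb_or -andbA.
have dn : [&& d3 != 0, d2 != 0 & d1 != 0] by rewrite d1n d2n d3n.
(* The factors are [d_i (z + (a_i / d_i) x + (b_i / d_i) y)] and [l] is the mean of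
   their shifts. *)
have Eal : al = (a1 / d1 + a2 / d2 + a3 / d3) / 3.
  have -> : al = 3 * (d1 * d2 * d3) * al / (3 * (d1 * d2 * d3)) by field.
  by rewrite E133; field.
have Ebe : be = (b1 / d1 + b2 / d2 + b3 / d3) / 3.
  have -> : be = 3 * (d1 * d2 * d3) * be / (3 * (d1 * d2 * d3)) by field.
  by rewrite E233; field.
have Eq11 : q11 = (a1 * a2 * d3 + a1 * a3 * d2 + a2 * a3 * d1) / (d1 * d2 * d3) - 3 * al ^+ 2.
  by rewrite -E113; field.
have Eq12 : q12 = (a1 * b2 * d3 + a1 * b3 * d2 + a2 * b1 * d3 + a2 * b3 * d1 + a3 * b1 * d2
    + a3 * b2 * d1) / (d1 * d2 * d3) - 6 * al * be by rewrite -E123; field.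
have Eq22 : q22 = (b1 * b2 * d3 + b1 * b3 * d2 + b2 * b3 * d1) / (d1 * d2 * d3) - 3 * be ^+ 2.
  by rewrite -E223; field.
have Ek0 : k0 = a1 * a2 * a3 / (d1 * d2 * d3) - al ^+ 3 - al * q11 by rewrite -E111; field.
have Ek1 : k1 = (a1 * a2 * b3 + a1 * a3 * b2 + a2 * a3 * b1) / (d1 * d2 * d3)
    - 3 * al ^+ 2 * be - al * q12 - be * q11 by rewrite -E112; field.
have Ek2 : k2 = (a1 * b2 * b3 + a2 * b1 * b3 + a3 * b1 * b2) / (d1 * d2 * d3)
    - 3 * al * be ^+ 2 - al * q22 - be * q12 by rewrite -E122; field.
have Ek3 : k3 = b1 * b2 * b3 / (d1 * d2 * d3) - be ^+ 3 - be * q22 by rewrite -E222; field.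
exists (a1 / d1 - al), (b1 / d1 - be), (a2 / d2 - al), (b2 / d2 - be).
exists (a3 / d3 - al), (b3 / d3 - be).
rewrite Ek0 Ek1 Ek2 Ek3 Eq11 Eq12 Eq22 Eal Ebe.
by split; try congr BQuad; try congr BCubic; field.
Qed.

End TernaryCubicsField.

Section Criterion.
Variable K : numClosedFieldType.
Implicit Types (c : tcubic K).

Lemma tcubic_split_depressedP (a : K) l q k : a != 0 ->
  tcubic_split (depressed a l q k) <-> cov_vanish q k.
Proof.
move=> a0; rewrite -splitsP.
by split; [apply: splits_depressed | apply: tcubic_split_depressed].
Qed.

Theorem tcubic_split_criterion c : c333 c != 0 ->
  (tcubic_split c <-> [/\ gcoef c c113 = 0, gcoef c c123 = 0, gcoef c c223 = 0,
                          gcoef c c133 = 0 & gcoef c c233 = 0]) /\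
  (disc (BQuad (c113 c) (c123 c) (c223 c)) != 0 ->
   (tcubic_split c <-> [/\ gcoef c c113 = 0, gcoef c c123 = 0 & gcoef c c223 = 0])).
Proof.
case/depressed_form => a [l [q [k [a0 ->]]]].
have [GQ GL] := gcoef_depressed a l q k.
have a4 : a ^+ 4 != 0 by rewrite expf_neq0.
have a12 : - 12 * a ^+ 4 != 0 by rewrite mulf_neq0 // oppr_eq0 pnatr_eq0.
rewrite !(tcubic_split_depressedP _ _ _ a0).
have fwd : cov_vanish q k -> [/\ gcoef (depressed a l q k) c113 = 0,
    gcoef (depressed a l q k) c123 = 0, gcoef (depressed a l q k) c223 = 0,
    gcoef (depressed a l q k) c133 = 0 & gcoef (depressed a l q k) c233 = 0].
  move=> [T E]; move: GQ GL; rewrite quad_cov_shift_lin_cov0 // E T.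
  by rewrite /quad_scale /lin_scale /= !mulr0 => -[-> -> ->] [-> ->].
have bwd : quad_cov_shift l q k = BQuad 0 0 0 -> lin_cov q k = BLin 0 0 -> cov_vanish q k.
  by move=> E T; split; rewrite // -(quad_cov_shift_lin_cov0 l T).
split.
  split=> [/fwd // | [g1 g2 g3 g4 g5]]; apply: bwd.
    by apply/(quad_scale_eq0 a4); rewrite -GQ g1 g2 g3.
  by apply/(lin_scale_eq0 a12); rewrite -GL g4 g5.
move=> D; split=> [/fwd [] // | [g1 g2 g3]].
have E : quad_cov_shift l q k = BQuad 0 0 0.
  by apply/(quad_scale_eq0 a4); rewrite -GQ g1 g2 g3.
apply: bwd (lin_cov_vanish_of_shift E _) => //.
by move: D; rewrite disc_depressed mulf_eq0 negb_or => /andP[].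
Qed.

End Criterion.

(** * Ternary cubic polynomials *)

Lemma mnm3_eqE (m m' : 'X_{1..3}) :
  (m == m') = [&& m e1 == m' e1, m e2 == m' e2 & m e3 == m' e3].
Proof.
apply/eqP/and3P => [-> // | [/eqP E1 /eqP E2 /eqP E3]].
by apply/mnmP => -[[|[|[|//]]] ?]; [rewrite (_ : Ordinal _ = e1) | rewrite (_ : Ordinal _ = e2)
  | rewrite (_ : Ordinal _ = e3)]; try apply/val_inj.
Qed.

Section TernaryPolynomials.
Variable R : comNzRingType.
Local Notation x := ('X_e1 : {mpoly R[3]}).
Local Notation y := ('X_e2 : {mpoly R[3]}).
Local Notation z := ('X_e3 : {mpoly R[3]}).
Implicit Types (c : tcubic R) (l : tlin R) (f : {mpoly R[3]}).

Definition cubic_poly c :=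
  (c111 c)%:MP * (x * x * x) + (c112 c)%:MP * (x * x * y) + (c113 c)%:MP * (x * x * z)
  + (c122 c)%:MP * (x * y * y) + (c123 c)%:MP * (x * y * z) + (c133 c)%:MP * (x * z * z)
  + (c222 c)%:MP * (y * y * y) + (c223 c)%:MP * (y * y * z) + (c233 c)%:MP * (y * z * z)
  + (c333 c)%:MP * (z * z * z).

Definition tlin_poly l := (la l)%:MP * x + (lb l)%:MP * y + (lc l)%:MP * z.

Definition cubic_coefs f :=
  TCubic (cf3 f e1 e1 e1) (cf3 f e1 e1 e2) (cf3 f e1 e1 e3) (cf3 f e1 e2 e2)
    (cf3 f e1 e2 e3) (cf3 f e1 e3 e3) (cf3 f e2 e2 e2) (cf3 f e2 e2 e3)
    (cf3 f e2 e3 e3) (cf3 f e3 e3 e3).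

Definition cubic_coef c (a b d : nat) : R :=
  match a, b, d with
  | 3, 0, 0 => c111 c | 2, 1, 0 => c112 c | 2, 0, 1 => c113 c | 1, 2, 0 => c122 c
  | 1, 1, 1 => c123 c | 1, 0, 2 => c133 c | 0, 3, 0 => c222 c | 0, 2, 1 => c223 c
  | 0, 1, 2 => c233 c | 0, 0, 3 => c333 c | _, _, _ => 0
  end.

Lemma mcoeff_cubic_poly c m : (cubic_poly c)@_m = cubic_coef c (m e1) (m e2) (m e3).
Proof.
rewrite /cubic_poly -!mpolyXD !mcoeffD !mcoeffCM !mcoeffX !mnm3_eqE !mnmDE !mnm1E /=.
move: (m e1) (m e2) (m e3) => a b d.
case: a => [|[|[|[|a]]]]; rewrite /= ?(mulr0, mulr1, addr0, add0r);
  case: b => [|[|[|[|b]]]]; rewrite /= ?(mulr0, mulr1, addr0, add0r);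
  by case: d => [|[|[|[|d]]]]; rewrite /= ?(mulr0, mulr1, addr0, add0r).
Qed.

Lemma cubic_coefsK c : cubic_coefs (cubic_poly c) = c.
Proof.
by case: c => *; rewrite /cubic_coefs /cf3; congr TCubic;
  rewrite mcoeff_cubic_poly !mnmDE !mnm1E.
Qed.

Lemma mdeg3 (m : 'X_{1..3}) : mdeg m = (m e1 + m e2 + m e3)%N.
Proof.
rewrite mdegE !big_ord_recl big_ord0 addn0 addnA.
by congr (m _ + m _ + m _)%N; apply/val_inj.
Qed.

Lemma cubic_coef_eq0 c a b d : (a + b + d != 3)%N -> cubic_coef c a b d = 0.
Proof.
by case: a => [|[|[|[|a]]]]; case: b => [|[|[|[|b]]]]; case: d => [|[|[|[|d]]]].
Qed.

Lemma cubic_coefsE f : f \is 3.-homog -> cubic_poly (cubic_coefs f) = f.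
Proof.
move=> hf; apply/mpolyP => m; rewrite mcoeff_cubic_poly.
have [md | md] := eqVneq (m e1 + m e2 + m e3)%N 3; last first.
  by rewrite cubic_coef_eq0 // (dhomog_nemf_coeff hf (_ : mdeg m != 3)) ?mdeg3.
have -> : m = (U_(e1) *+ m e1 + U_(e2) *+ m e2 + U_(e3) *+ m e3)%MM.
  by apply/eqP; rewrite mnm3_eqE !mnmDE !mulmnE !mnm1E /= !(mul1n, mul0n, addn0, add0n) !eqxx.
rewrite !mnmDE !mulmnE !mnm1E /= !(muln1, muln0, addn0, add0n).
move: md; move: (m e1) (m e2) (m e3) => a b d.
case: a => [|[|[|[|a]]]]; case: b => [|[|[|[|b]]]]; case: d => [|[|[|[|d]]]] md;
  try discriminate md.
all: rewrite [LHS]/= /cf3; congr (mcoeff _ f); apply/eqP.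
all: by rewrite mnm3_eqE !mnmDE !mulmnE !mnm1E.
Qed.

Lemma tlin_poly_homog l : tlin_poly l \is 1.-homog.
Proof.
rewrite /tlin_poly !mul_mpolyC; repeat apply: rpredD; apply: dhomogZ.
all: by rewrite dhomogX /= mdeg1.
Qed.

Lemma tlin_polyE p : p \is 1.-homog -> p = tlin_poly (TLin p@_U_(e1) p@_U_(e2) p@_U_(e3)).
Proof.
move=> hp; apply/mpolyP => m; rewrite /tlin_poly !mcoeffD !mcoeffCM !mcoeffX /=.
have [/mdeg1P [i /eqP ->] | m1] := boolP (mdeg m == 1%N); last first.
  have F j : (U_(j) == m)%MM = false by apply: contraNF m1 => /eqP <-; rewrite mdeg1.
  by rewrite (dhomog_nemf_coeff hp m1) !F !mulr0 !addr0.
case: i => -[|[|[|//]]] i3; rewrite !eq_mnm1 /= !(mulr0, mulr1, addr0, add0r).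
all: by congr (p@_U_(_)); apply/val_inj.
Qed.

Lemma tlin_poly_prod l1 l2 l3 :
  tlin_poly l1 * tlin_poly l2 * tlin_poly l3 = cubic_poly (tlin_prod l1 l2 l3).
Proof.
by case: l1 l2 l3 => [a1 b1 d1] [a2 b2 d2] [a3 b3 d3]; rewrite /tlin_poly /cubic_poly /=; ring.
Qed.

Lemma completely_reducibleP f :
  f \is 3.-homog -> completely_reducible f <-> tcubic_split (cubic_coefs f).
Proof.
move=> hf; split=> [[l1 [l2 [l3 [h1 h2 h3 ->]]]] | [l1 [l2 [l3 E]]]].
  rewrite (tlin_polyE h1) (tlin_polyE h2) (tlin_polyE h3) tlin_poly_prod cubic_coefsK.
  by do 3!eexists.
exists (tlin_poly l1), (tlin_poly l2), (tlin_poly l3).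
by split; rewrite ?tlin_poly_homog // tlin_poly_prod -E cubic_coefsE.
Qed.

End TernaryPolynomials.

Lemma det_mx33 (R : comNzRingType) (A : 'M[R]_3) : \det A =
  A e1 e1 * (A e2 e2 * A e3 e3 - A e2 e3 * A e3 e2)
  - A e1 e2 * (A e2 e1 * A e3 e3 - A e2 e3 * A e3 e1)
  + A e1 e3 * (A e2 e1 * A e3 e2 - A e2 e2 * A e3 e1).
Proof.
pose a (i j : nat) := A (inord i) (inord j).
have hA i j : A i j = a i j by rewrite /a !inord_val.
rewrite (expand_det_row _ e1) !big_ord_recl big_ord0 /cofactor.
rewrite !(expand_det_row _ ord0) !big_ord_recl !big_ord0 /cofactor !det_mx11 !mxE /=.
by rewrite !hA /= /a; ring.
Qed.

Section Hessian.
Variable F : numFieldType.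

Lemma mderivXi (i j : 'I_3) : ('X_j : {mpoly F[3]})^`M(i) = (j == i)%:R%:MP.
Proof.
rewrite mderivX mnm1E; case: eqP => [->|_]; last by rewrite scale0r.
by rewrite -[X in (X - _)%MM]add0m addmK mpolyX0 scale1r.
Qed.

Lemma mderiv2_X3 (i j a b d : 'I_3) :
  ('X_a * 'X_b * 'X_d : {mpoly F[3]})^`M(j)^`M(i) =
  (a == j)%:R%:MP * ((b == i)%:R%:MP * 'X_d + (d == i)%:R%:MP * 'X_b)
  + (b == j)%:R%:MP * ((a == i)%:R%:MP * 'X_d + (d == i)%:R%:MP * 'X_a)
  + (d == j)%:R%:MP * ((a == i)%:R%:MP * 'X_b + (b == i)%:R%:MP * 'X_a).
Proof. by rewrite !(mderivM, mderivD, mderivXi, mderivC, mderiv_mulC); ring. Qed.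

Lemma hessian_cubic_poly (c : tcubic F) : hessian (cubic_poly c) = cubic_poly (tcubic_hess c).
Proof.
rewrite /hessian (_ : \det _ = 2%:R%:MP * cubic_poly (tcubic_hess c)).
  by rewrite -mul_mpolyC mulrA -rmorphM mulVf ?pnatr_eq0 // mul1r.
set f := cubic_poly c.
have [[d11 d21 d31] d22 d32 d33] :
  [/\ [/\ f^`M(e1)^`M(e1) = tlin_poly (TLin (6 * c111 c) (2 * c112 c) (2 * c113 c)),
          f^`M(e2)^`M(e1) = tlin_poly (TLin (2 * c112 c) (2 * c122 c) (c123 c))
        & f^`M(e3)^`M(e1) = tlin_poly (TLin (2 * c113 c) (c123 c) (2 * c133 c))],
      f^`M(e2)^`M(e2) = tlin_poly (TLin (2 * c122 c) (6 * c222 c) (2 * c223 c)),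
      f^`M(e3)^`M(e2) = tlin_poly (TLin (c123 c) (2 * c223 c) (2 * c233 c))
    & f^`M(e3)^`M(e3) = tlin_poly (TLin (2 * c133 c) (2 * c233 c) (6 * c333 c))].
  by rewrite /f /cubic_poly /tlin_poly; split; [split | ..];
    rewrite !mderivD !mderiv_mulC !mderiv2_X3 /=; ring.
rewrite det_mx33 /hessmx !mxE (mderiv_comm e1 e2) (mderiv_comm e1 e3) (mderiv_comm e2 e3).
rewrite d11 d21 d31 d22 d32 d33 /tlin_poly /f /cubic_poly /=.
by case: c {f d11 d21 d31 d22 d32 d33} => * /=; ring.
Qed.

Lemma cubic_coefs_hessian (f : {mpoly F[3]}) :
  f \is 3.-homog -> cubic_coefs (hessian f) = tcubic_hess (cubic_coefs f).
Proof. by move=> hf; rewrite -{1}(cubic_coefsE hf) hessian_cubic_poly cubic_coefsK. Qed.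

End Hessian.

Unset Implicit Arguments.

Theorem lemma10p1 (R : realType) (f : {mpoly R[i][3]}) :
  f \is 3.-homog ->
  cf3 f e3 e3 e3 != 0 ->
  let g := cf3 (hessian f) e3 e3 e3 *: f - cf3 f e3 e3 e3 *: hessian f in
  (completely_reducible f <->
     [/\ cf3 g e1 e1 e3 = 0, cf3 g e1 e2 e3 = 0, cf3 g e2 e2 e3 = 0,
         cf3 g e1 e3 e3 = 0 & cf3 g e2 e3 e3 = 0])
  /\
  (4%:R * cf3 f e1 e1 e3 * cf3 f e2 e2 e3 - cf3 f e1 e2 e3 ^+ 2 != 0 ->
   (completely_reducible f <->
     [/\ cf3 g e1 e1 e3 = 0, cf3 g e1 e2 e3 = 0 & cf3 g e2 e2 e3 = 0])).
Proof.
move=> f3 f333 g.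
have [C1 C2] := @tcubic_split_criterion _ (cubic_coefs f) f333.
rewrite /gcoef -(cubic_coefs_hessian f3) in C1 C2.
have Eg i j k : cf3 g i j k =
    cf3 (hessian f) e3 e3 e3 * cf3 f i j k - cf3 f e3 e3 e3 * cf3 (hessian f) i j k.
  by rewrite /g /cf3 mcoeffB !mcoeffZ.
by rewrite (completely_reducibleP f3) !Eg; split.
Qed.
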